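(* Let $P_x$ be a category of partitions. Then: (1) if $p\in P_x(k,l)$ then $\bar p\in P_x(0,k+l)$; (2) if $p\in P_x$ has a block with $s$ elements, then $1_s\in P_x(0,s)$ or $\uparrow\otimes 1_s\in P_x(0,s+1)$; (3) if $p\in P(k,l)$ is such that for every block $b$ of $p$ one has $1_{|b|}\in P_x(0,|b|)$, then $p\in P_x(k,l)$.
   Context: For integers $k,l\ge0$, $P(k,l)$ is the set of partitions (decompositions into disjoint nonempty blocks) of a set consisting of $k$ upper points labelled $1,\dots,k$ and $l$ lower points labelled $1,\dots,l$, pictured with the upper points on a top row and the lower points on a bottom row. Tensor product: for $p\in P(k,l)$, $q\in P(k',l')$, $p\otimes q\in P(k+k',l+l')$ is obtained by placing $q$ to the right of $p$. Composition: for $p\in P(m,l)$ and $q\in P(k,m)$, $pq\in P(k,l)$ is obtained by placing $q$ above $p$, identifying the $m$ lower points of $q$ with the $m$ upper points of $p$, merging blocks connected through these middle points, and then deleting the middle points together with all blocks consisting only of middle points. Involution: $p^*\in P(l,k)$ is the upside-down reflection of $p\in P(k,l)$. Special partitions: $|\in P(1,1)$ (one block containing the upper and the lower point); the basic crossing in $P(2,2)$, with blocks $\{\text{upper }1,\text{lower }2\}$ and $\{\text{upper }2,\text{lower }1\}$; $\sqcap\in P(0,2)$ (one block containing both lower points); $\uparrow\in P(0,1)$ (the singleton). A category of partitions is a family of subsets $P_x(k,l)\subset P(k,l)$ ($k,l\ge0$) stable under tensor product, composition (whenever defined) and involution, and containing $|$, the basic crossing and $\sqcap$. For $s\ge1$,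 $1_s\in P(0,s)$ denotes the one-block partition of $s$ lower points. For $p\in P(k,l)$, $\bar p\in P(0,k+l)$ is obtained by rotating the upper points counterclockwise down to the bottom row: its lower points $1,\dots,k$ are the former upper points $k,k-1,\dots,1$ and its lower points $k+1,\dots,k+l$ are the former lower points $1,\dots,l$, the block structure being unchanged. *)

From HB Require Import structures.
From mathcomp Require Import all_boot.
Set Implicit Arguments. Unset Strict Implicit. Unset Printing Implicit Defensive.

(* Points: inl i = upper point i+1, inr j = lower point j+1 (0-based ordinals). *)
Definition pt (k l : nat) : finType := ('I_k + 'I_l)%type.

Definition ppart (k l : nat) := {set {set pt k l}}.

Definition is_part (k l : nat) (p : ppart k l) : bool := partition p [set: pt k l].

Definition map_blocks (aT rT : finType) (f : aT -> rT) (p : {set {set aT}})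
  : {set {set rT}} := [set f @: (B : {set aT}) | B in p].

Definition tens_l (k l k' l' : nat) (x : pt k l) : pt (k + k') (l + l') :=
  match x with inl i => inl (lshift k' i) | inr j => inr (lshift l' j) end.
Definition tens_r (k l k' l' : nat) (x : pt k' l') : pt (k + k') (l + l') :=
  match x with inl i => inl (rshift k i) | inr j => inr (rshift l j) end.
Definition tensor (k l k' l' : nat) (p : ppart k l) (q : ppart k' l')
  : ppart (k + k') (l + l') :=
  map_blocks (@tens_l k l k' l') p :|: map_blocks (@tens_r k l k' l') q.

Definition swap_pt (k l : nat) (x : pt k l) : pt l k :=
  match x with inl i => inr i | inr j => inl j end.
Definition invol (k l : nat) (p : ppart k l) : ppart l k :=
  map_blocks (@swap_pt k l) p.

(* Composition p q for p in P(m,l), q in P(k,m): q is placed above p.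
   Three rows: top ('I_k, upper points of q), middle ('I_m), bottom ('I_l,
   lower points of p). *)
Definition pt3 (k m l : nat) : finType := ('I_k + ('I_m + 'I_l))%type.
Definition emb_q (k m l : nat) (x : pt k m) : pt3 k m l :=
  match x with inl i => inl i | inr j => inr (inl j) end.
Definition emb_p (k m l : nat) (x : pt m l) : pt3 k m l :=
  match x with inl j => inr (inl j) | inr j => inr (inr j) end.
Definition emb_out (k m l : nat) (x : pt k l) : pt3 k m l :=
  match x with inl i => inl i | inr j => inr (inr j) end.
Definition glue_rel (k m l : nat) (p : ppart m l) (q : ppart k m) : rel (pt3 k m l) :=
  fun x y =>
    [exists B in map_blocks (@emb_p k m l) p :|: map_blocks (@emb_q k m l) q,
       (x \in B) && (y \in B)].
(* blocks of pq: the connected components (through middle points) restricted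
   to the top and bottom rows; purely-middle components are discarded. *)
Definition comp (k m l : nat) (p : ppart m l) (q : ppart k m) : ppart k l :=
  [set [set y : pt k l | connect (glue_rel p q) (emb_out m x) (emb_out m y)] | x : pt k l].

Definition idp : ppart 1 1 := [set setT].
Definition cross : ppart 2 2 :=
  [set [set (inl (ord0 : 'I_2) : pt 2 2); inr (ord_max : 'I_2)];
       [set (inl (ord_max : 'I_2) : pt 2 2); inr (ord0 : 'I_2)]].
Definition sqcap : ppart 0 2 := [set setT].
Definition uparrow : ppart 0 1 := [set setT].
(* 1_s : the one-block partition of s lower points (meaningful for s >= 1). *)
Definition one_s (s : nat) : ppart 0 s := [set setT].

(* Rotation p |-> bar p. Lower point i+1 (i < k) of bar p is former upper
   point k-i, i.e. 0-based upper index rev_ord i; lower point k+j+1 is former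
   lower point j+1. *)
Definition rot_pt (k l : nat) (x : pt k l) : pt 0 (k + l) :=
  match x with inl i => inr (lshift l (rev_ord i)) | inr j => inr (rshift k j) end.
Definition bar (k l : nat) (p : ppart k l) : ppart 0 (k + l) :=
  map_blocks (@rot_pt k l) p.

Record is_category (Px : forall k l : nat, ppart k l -> Prop) : Prop := {
  cat_sub : forall k l (p : ppart k l), Px k l p -> is_part p;
  cat_tensor : forall k l k' l' (p : ppart k l) (q : ppart k' l'),
      Px k l p -> Px k' l' q -> Px (k + k') (l + l') (tensor p q);
  cat_comp : forall k m l (p : ppart m l) (q : ppart k m),
      Px m l p -> Px k m q -> Px k l (comp p q);
  cat_invol : forall k l (p : ppart k l), Px k l p -> Px l k (invol p);
  cat_id : Px 1 1 idp;
  cat_cross : Px 2 2 cross;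
  cat_sqcap : Px 0 2 sqcap
}.

(* Every relabelling of the points by a bijection preserves P_x.  Tensoring
   identities with the crossing gives the adjacent transpositions, so composing
   with permutation partitions permutes the lower points of a partition of
   P_x(0,n) arbitrarily; composing | (x) p with the cap tensored with identities
   turns the first upper point of p into a new first lower point; and the
   involution turns lower points back into upper ones.
   Then (1) is the relabelling [rot_pt], and (3) holds because p is a
   relabelling of the tensor product of the 1_|b| over its blocks b.  For (2),
   relabel p so that the block B is the whole lower row, and cap the c other
   points, now upper, pairwise with a tensor product of caps: this leaves 1_|B|
   when c is even and, after first moving one of them to the lower row,
   uparrow (x) 1_|B| when c is odd. *)

From Pilot Require Import Defs.
From mathcomp Require Import all_boot perm fingroup zify.
Set Implicit Arguments. Unset Strict Implicit. Unset Printing Implicit Defensive.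

Local Notation pcomp := Defs.comp.

Lemma eq_map_blocks (aT rT : finType) (f g : aT -> rT) (p : {set {set aT}}) :
  f =1 g -> map_blocks f p = map_blocks g p.
Proof. by move=> fg; apply: eq_imset => B; apply: eq_imset. Qed.

Lemma map_blocks_comp (aT bT cT : finType) (f : aT -> bT) (g : bT -> cT)
    (p : {set {set aT}}) :
  map_blocks (g \o f) p = map_blocks g (map_blocks f p).
Proof.
by rewrite /map_blocks -imset_comp; apply: eq_imset => B /=; apply: imset_comp.
Qed.

Lemma map_blocks_id (aT : finType) (f : aT -> aT) (p : {set {set aT}}) :
  f =1 id -> map_blocks f p = p.
Proof.
move=> fid; rewrite (eq_map_blocks _ fid) /map_blocks (eq_imset (g := id)) ?imset_id //.
by move=> B; rewrite imset_id.
Qed.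

Lemma map_blocks_f (aT rT : finType) (f : aT -> rT) (p : {set {set aT}}) B :
  B \in p -> f @: B \in map_blocks f p.
Proof. exact: imset_f. Qed.

Lemma card_pt k l : #|{: pt k l}| = k + l.
Proof. by rewrite card_sum !card_ord. Qed.

Lemma split_lshift m n (i : 'I_m) : split (lshift n i) = inl i.
Proof. exact: (unsplitK (inl i)). Qed.

Lemma split_rshift m n (i : 'I_n) : split (rshift m i) = inr i.
Proof. exact: (unsplitK (inr i)). Qed.

Lemma mem_tensor_l k l k' l' (p : ppart k l) (q : ppart k' l') C :
  C \in p -> @tens_l k l k' l' @: C \in tensor p q.
Proof. by move=> Cp; rewrite inE map_blocks_f. Qed.

Lemma mem_tensor_r k l k' l' (p : ppart k l) (q : ppart k' l') C :
  C \in q -> @tens_r k l k' l' @: C \in tensor p q.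
Proof. by move=> Cq; rewrite inE map_blocks_f ?orbT. Qed.

Lemma tensorP k l k' l' (p : ppart k l) (q : ppart k' l') C :
  C \in tensor p q ->
  (exists2 D, D \in p & C = @tens_l k l k' l' @: D) \/
  (exists2 D, D \in q & C = @tens_r k l k' l' @: D).
Proof. by rewrite inE => /orP[] /imsetP[D DP ->]; [left|right]; exists D. Qed.

Lemma swap_ptK k l : cancel (@swap_pt k l) (@swap_pt l k).
Proof. by case. Qed.

Lemma rot_pt_bij k l : bijective (@rot_pt k l).
Proof.
apply: inj_card_bij; last by rewrite !card_pt.
move=> [i|j] [i'|j'] /= [] E.
- by congr inl; apply: ord_inj; have := ltn_ord i; have := ltn_ord i'; lia.
- by have := ltn_ord i; lia.
- by have := ltn_ord i'; lia.
- by congr inr; apply: ord_inj; lia.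
Qed.

Lemma map_blocks_tensor (T : finType) k l k' l' (g : pt (k + k') (l + l') -> T)
    (p : ppart k l) (q : ppart k' l') :
  map_blocks g (tensor p q) =
  map_blocks (g \o @tens_l k l k' l') p :|: map_blocks (g \o @tens_r k l k' l') q.
Proof. by rewrite (map_blocks_comp _ g p) (map_blocks_comp _ g q); apply: imsetU. Qed.

Section Composition.
Variables (k m l : nat) (p : ppart m l) (q : ppart k m).

Lemma glue_rel_emb_p C a b :
  C \in p -> a \in C -> b \in C -> glue_rel p q (emb_p k a) (emb_p k b).
Proof.
move=> Cp aC bC; apply/existsP; exists (@emb_p k m l @: C).
by rewrite inE map_blocks_f //= !imset_f.
Qed.

Lemma glue_rel_emb_q C a b :
  C \in q -> a \in C -> b \in C -> glue_rel p q (emb_q l a) (emb_q l b).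
Proof.
move=> Cq aC bC; apply/existsP; exists (@emb_q k m l @: C).
by rewrite inE map_blocks_f ?orbT //= !imset_f.
Qed.

Lemma glue_relP u v :
  glue_rel p q u v ->
  (exists C a b, [/\ C \in p, a \in C, b \in C, u = emb_p k a & v = emb_p k b]) \/
  (exists C a b, [/\ C \in q, a \in C, b \in C, u = emb_q l a & v = emb_q l b]).
Proof.
case/existsP=> B /andP[]; rewrite inE => /orP[]/imsetP[C CP ->]/andP[]
  /imsetP[a aC ->] /imsetP[b bC ->]; [left|right]; by exists C, a, b.
Qed.

Lemma glue_rel_sym : symmetric (glue_rel p q).
Proof.
move=> u v; apply/existsP/existsP => -[B /and3P[BP uB vB]];
  by exists B; rewrite BP uB vB.
Qed.

Lemma connect_glue_rel_sym u v :
  connect (glue_rel p q) u v = connect (glue_rel p q) v u.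
Proof. by rewrite (sym_connect_sym glue_rel_sym). Qed.

Lemma comp_by_colouring (C : eqType) (c : pt3 k m l -> C) :
  (forall u v, glue_rel p q u v -> c u = c v) ->
  (forall x y, c (emb_out m x) = c (emb_out m y) ->
     connect (glue_rel p q) (emb_out m x) (emb_out m y)) ->
  pcomp p q = [set [set y | c (emb_out m y) == c (emb_out m x)] | x : pt k l].
Proof.
move=> c_glue c_connect; apply: eq_imset => x; apply/setP => y; rewrite !inE.
apply/idP/idP => [xy|/eqP cxy]; last exact: c_connect.
have cl : closed (glue_rel p q) [pred u | c u == c (emb_out m x)].
  by move=> u v /c_glue; rewrite !inE => ->.
by move: (closed_connect cl xy); rewrite !inE eqxx => <-.
Qed.

End Composition.

Lemma pblock_classes_map (V W : finType) (P : {set {set W}}) (phi : V -> W)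
    (g : W -> V) :
  partition P [set: W] -> cancel phi g -> cancel g phi ->
  [set [set y | pblock P (phi y) == pblock P (phi x)] | x : V] = map_blocks g P.
Proof.
case/and3P=> /eqP cov triv nz phiK gK.
have inc w : w \in cover P by rewrite cov inE.
apply/setP=> B; apply/imsetP/imsetP => [[x _ ->]|[C CP ->]].
  exists (pblock P (phi x)); first exact: pblock_mem.
  apply/setP=> y; rewrite inE; apply/idP/imsetP => [xy|[w wP ->]].
    by exists (phi y); rewrite ?phiK // eq_sym eq_pblock in xy.
  by rewrite gK eq_sym eq_pblock.
have [w wC] : exists w, w \in C by apply/set0Pn; apply: contraNneq nz => <-.
exists (g w) => //; apply/setP => y; rewrite inE gK (def_pblock triv CP wC).
apply/imsetP/idP => [[z zC ->]|yw]; first by rewrite gK -(def_pblock triv CP zC).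
by exists (phi y); rewrite ?phiK // -(eqP yw) mem_pblock inc.
Qed.

Definition lowers k l (J : {set 'I_l}) : {set pt k l} :=
  [set x | if x is inr j then j \in J else false].

Lemma comp_cap m l (p : ppart m l) (q : ppart 0 m) (J : {set 'I_l}) :
  is_part p -> lowers m J \in p -> #|~: J| <= 1 ->
  pcomp p q = [set [set y | (y \in lowers 0 J) == (x \in lowers 0 J)] | x : pt 0 l].
Proof.
move=> pP Jp /card_le1_eqP J1; have [_ triv _] := and3P pP.
pose c (u : pt3 0 m l) := if u is inr (inr j) then j \in J else false.
rewrite (comp_by_colouring (c := c)).
- apply: eq_imset => x; apply/setP => y.
  by case: x => [[]//|i]; case: y => [[]//|j]; rewrite !inE.
- move=> u v /glue_relP[[C [a [b [Cp aC bC -> ->]]]]|[C [a [b [Cp aC bC -> ->]]]]].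
    have cE z : z \in C -> c (emb_p 0 z) = (C == lowers m J).
      move=> zC; have -> : c (emb_p 0 z) = (z \in lowers m J).
        by rewrite inE; case: z {zC}.
      apply/idP/eqP => [zJ|<-] //.
      by rewrite -(def_pblock triv Cp zC) (def_pblock triv Jp zJ).
    by rewrite (cE a aC) (cE b bC).
  by case: a {aC} => [[]|]; case: b {bC} => [[]|].
move=> [[]//|j] [[]//|j'] /=.
case: (boolP (j \in J)) => jJ; case: (boolP (j' \in J)) => j'J // _.
  by apply/connect1/(glue_rel_emb_p q Jp (a := inr j) (b := inr j')); rewrite inE.
by rewrite (J1 j j') ?inE // connect0.
Qed.

Lemma cap_setT s :
  0 < s ->
  [set [set y | (y \in lowers 0 [set: 'I_s]) == (x \in lowers 0 [set: 'I_s])]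
    | x : pt 0 s] = one_s s.
Proof.
case: s => // s _; apply/setP=> Z; rewrite /one_s inE.
apply/imsetP/eqP => [[x _ ->]|->].
  by apply/setP=> y; case: x => [[]//|i]; case: y => [[]//|j]; rewrite !inE.
by exists (inr ord0) => //; apply/setP=> y; case: y => [[]//|j]; rewrite !inE.
Qed.

Lemma cap_first_lower s :
  0 < s ->
  [set [set y | (y \in lowers 0 [set j : 'I_(1 + s) | 0 < j])
             == (x \in lowers 0 [set j : 'I_(1 + s) | 0 < j])] | x : pt 0 (1 + s)]
  = tensor uparrow (one_s s).
Proof.
move=> s_gt0; set J := [set j : 'I_(1 + s) | 0 < j].
set L := @tens_l 0 1 0 s @: [set: pt 0 1].
set R := @tens_r 0 1 0 s @: [set: pt 0 s].
have inR y : (y \in R) = (y \in lowers 0 J).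
  rewrite !inE; case: y => [[]//|j] /=; rewrite inE.
  apply/imsetP/idP => [[[[]//|z] _ [->]] //|j_gt0].
  have jz : j - 1 < s by have := ltn_ord j; lia.
  by exists (inr (Ordinal jz)) => //; congr inr; apply: val_inj => /=; lia.
have inL y : (y \in L) = (y \notin lowers 0 J).
  rewrite !inE; case: y => [[]//|j] /=; rewrite inE -leqNgt leqn0.
  apply/imsetP/idP => [[[[]//|z] _ [->]] /=|/eqP j0]; first by rewrite (ord1 z).
  by exists (inr ord0) => //; congr inr; apply: val_inj => /=; lia.
have -> : tensor uparrow (one_s s) = [set L; R].
  by rewrite /tensor /map_blocks /one_s /uparrow !imset_set1.
apply/setP => Z; rewrite !inE; apply/imsetP/orP => [[x _ ->]|[] /eqP ->].
- case: (boolP (x \in lowers 0 J)) => xJ; [right|left]; apply/eqP/setP => y;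
    by rewrite inE ?inL ?inR; case: (y \in lowers 0 J).
- exists (inr ord0) => //; apply/setP => y; rewrite inE inL !inE /=.
  by case: (y \in lowers 0 J).
- have lt1 : 1 < 1 + s by rewrite add1n ltnS.
  exists (inr (Ordinal lt1)) => //; apply/setP => y; rewrite inE inR !inE /=.
  by case: (y \in lowers 0 J).
Qed.

Definition permpart n (f : 'I_n -> 'I_n) : ppart n n :=
  [set [set (inl i : pt n n); inr (f i)] | i : 'I_n].

Definition ord_sum_map a b (f : 'I_a -> 'I_a) (g : 'I_b -> 'I_b) (j : 'I_(a + b)) :
    'I_(a + b) :=
  match split j with inl i => lshift b (f i) | inr i => rshift a (g i) end.

Definition perm_lower n (f : {perm 'I_n}) (x : pt 0 n) : pt 0 n :=
  match x with inl i => inl i | inr j => inr (f j) end.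

Lemma eq_permpart n (f g : 'I_n -> 'I_n) : f =1 g -> permpart f = permpart g.
Proof. by move=> fg; apply: eq_imset => i; rewrite fg. Qed.

Lemma tensor_permpart a b (f : 'I_a -> 'I_a) (g : 'I_b -> 'I_b) :
  tensor (permpart f) (permpart g) = permpart (ord_sum_map f g).
Proof.
rewrite /tensor /permpart /map_blocks -!imset_comp.
apply/setP=> B; rewrite inE; apply/orP/imsetP => [[]|[j _ ->]].
- case/imsetP=> i _ ->; exists (lshift b i) => //=.
  by rewrite imsetU1 imset_set1 /ord_sum_map split_lshift.
- case/imsetP=> i _ ->; exists (rshift a i) => //=.
  by rewrite imsetU1 imset_set1 /ord_sum_map split_rshift.
rewrite /ord_sum_map; case: (split j) (splitK j) => i <-; [left|right];
  by apply/imsetP; exists i => //=; rewrite imsetU1 imset_set1.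
Qed.

Lemma idp_permpart : idp = permpart id.
Proof.
apply/setP=> B; rewrite inE /permpart; apply/eqP/imsetP => [->|[i _ ->]].
  by exists ord0 => //; apply/setP=> -[] x; rewrite !inE (ord1 x).
by apply/setP=> -[] x; rewrite !inE (ord1 x) (ord1 i).
Qed.

Lemma cross_permpart : cross = permpart (@rev_ord 2).
Proof.
apply/setP=> B; rewrite /cross /permpart !inE.
apply/orP/imsetP => [[]/eqP->|[i _ ->]].
- by exists ord0 => //; congr [set _; _]; congr inr; apply: val_inj.
- by exists ord_max => //; congr [set _; _]; congr inr; apply: val_inj.
case: i => -[|[|//]] Hi; [left|right];
  by apply/eqP; congr [set _; _]; [congr inl|congr inr]; apply: val_inj.
Qed.

Lemma comp_permpart n (f : {perm 'I_n}) (q : ppart 0 n) :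
  is_part q -> pcomp (permpart f) q = map_blocks (perm_lower f) q.
Proof.
move=> qP; have [/eqP cov triv _] := and3P qP.
have inc w : w \in cover q by rewrite cov inE.
pose pi (u : pt3 0 n n) : pt 0 n :=
  match u with
  | inl i => inl i | inr (inl a) => inr a | inr (inr b) => inr ((f^-1)%g b)
  end.
have lower_to_middle c : connect (glue_rel (permpart f) q)
    (emb_out n (inr c : pt 0 n)) (inr (inl ((f^-1)%g c))).
  apply: connect1; rewrite -{1}(permKV f c).
  have Cf : [set (inl ((f^-1)%g c) : pt n n); inr (f ((f^-1)%g c))] \in permpart f.
    exact: imset_f.
  by apply: (glue_rel_emb_p q Cf (a := inr _) (b := inl _)); rewrite !inE eqxx ?orbT.
rewrite (comp_by_colouring (c := fun u => pblock q (pi u))).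
- apply: pblock_classes_map => //; last by move=> [[]//|j] /=; rewrite permK.
  by move=> [[]//|j] /=; rewrite permKV.
- move=> u v /glue_relP [[C [a [b [CP aC bC -> ->]]]]|[C [a [b [CP aC bC -> ->]]]]].
    case/imsetP: CP aC bC => i _ -> aC bC.
    suff E z : z \in [set (inl i : pt n n); inr (f i)] -> pi (emb_p 0 z) = inr i.
      by rewrite (E a aC) (E b bC).
    by rewrite !inE => /orP[] /eqP -> //=; rewrite permK.
  have E z : pi (emb_q n z) = z by case: z => [[]|].
  by rewrite !E (def_pblock triv CP aC) (def_pblock triv CP bC).
move=> [[]//|b] [[]//|b'] /= bb'.
apply: connect_trans (lower_to_middle b) _; rewrite connect_glue_rel_sym.
apply: connect_trans (lower_to_middle b') _; apply: connect1.
apply: (glue_rel_emb_q _ (pblock_mem (inc (inr ((f^-1)%g b'))))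
  (a := inr ((f^-1)%g b')) (b := inr ((f^-1)%g b))).
  by rewrite mem_pblock.
by rewrite -bb' mem_pblock.
Qed.

Definition rot1_pt k l (x : pt k.+1 l) : pt k (1 + l) :=
  match x with
  | inl i => if unlift ord0 i is Some i' then inl i' else inr (lshift l ord0)
  | inr j => inr (rshift 1 j)
  end.

Definition rot1_pt_inv k l (x : pt k (1 + l)) : pt k.+1 l :=
  match x with
  | inl i => inl (lift ord0 i)
  | inr j => if split j is inr j' then inr j' else inl ord0
  end.

Lemma rot1_ptK k l : cancel (@rot1_pt k l) (@rot1_pt_inv k l).
Proof.
case=> [i|j] /=; last by rewrite split_rshift.
by case: unliftP => [i' ->|->] //=; rewrite split_lshift.
Qed.

Lemma rot1_pt_invK k l : cancel (@rot1_pt_inv k l) (@rot1_pt k l).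
Proof.
case=> [i|j] /=; first by rewrite liftK.
by case: (split j) (splitK j) => [i <-|j' <-] //=; rewrite unlift_none (ord1 i).
Qed.

Lemma rot1_lowers c s :
  @rot1_pt c s @: lowers c.+1 [set: 'I_s] = lowers c [set j : 'I_(1 + s) | 0 < j].
Proof.
apply/setP => x; rewrite (can2_imset_pre _ (@rot1_ptK c s) (@rot1_pt_invK c s)).
rewrite !inE; case: x => [//|j] /=; rewrite inE.
by case: splitP => z ->; rewrite ?inE ?(ord1 z).
Qed.

Section RotateOnePoint.
Variables (k l : nat) (p : ppart k.+1 l).
Hypothesis p_part : is_part p.

Local Notation pu := (tensor idp p : ppart (1 + k.+1) (1 + l)).
Local Notation qu := (tensor sqcap (permpart id) : ppart k (1 + k.+1)).

(* Read a point of the three-row picture of [pcomp pu qu] as the point of [p]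
   it is attached to: the first upper point of [p] is carried by the first two
   middle points and the first lower point, the other upper points of [p] by
   the top row. *)
Definition rot1_source (u : pt3 k (1 + k.+1) (1 + l)) : pt k.+1 l :=
  match u with
  | inl i => inl (lift ord0 i)
  | inr (inl a) => if split a is inr i then inl i else inl ord0
  | inr (inr j) => if split j is inr j' then inr j' else inl ord0
  end.

Lemma rot1_source_out x : rot1_source (emb_out (1 + k.+1) x) = rot1_pt_inv x.
Proof. by case: x. Qed.

Lemma rot1_source_p (x : pt k.+1 l) : rot1_source (emb_p k (tens_r 1 1 x)) = x.
Proof. by case: x => [i|j] /=; rewrite split_rshift. Qed.

Lemma rot1_source_glue u v :
  glue_rel pu qu u v -> pblock p (rot1_source u) = pblock p (rot1_source v).
Proof.
have [_ triv _] := and3P p_part.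
case/glue_relP=> -[C [a [b [CP aC bC -> ->]]]].
  case: (@tensorP 1 1 k.+1 l idp p C CP) aC bC
    => -[D DP ->] /imsetP[a' a'D ->] /imsetP[b' b'D ->].
    by case: a' b' {a'D b'D} => [a'|a'] [b'|b'] /=; rewrite !split_lshift.
  by rewrite !rot1_source_p (def_pblock triv DP a'D) (def_pblock triv DP b'D).
case: (@tensorP 0 2 k k sqcap (permpart id) C CP) aC bC
  => -[D DP ->] /imsetP[a' a'D ->] /imsetP[b' b'D ->].
  suff E (z : pt 0 2) : rot1_source (emb_q (1 + l) (tens_l k k z)) = inl ord0.
    by rewrite !E.
  case: z => [[]//|j] /=.
  by case: splitP => //= i Ei; congr inl; apply: val_inj => /=; have := ltn_ord j; lia.
case/imsetP: DP a'D b'D => i _ -> a'D b'D.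
suff E z : z \in [set (inl i : pt k k); inr i] ->
    rot1_source (emb_q (1 + l) (tens_r 0 2 z)) = inl (lift ord0 i).
  by rewrite (E a' a'D) (E b' b'D).
rewrite !inE => /orP[] /eqP -> /=; first by congr inl; apply: val_inj.
case: splitP => /= i' Ei'; first by have := ltn_ord i'; lia.
by congr inl; apply: val_inj; rewrite /= /bump /=; lia.
Qed.

Lemma connect_rot1_source x :
  connect (glue_rel pu qu) (emb_out (1 + k.+1) x)
    (emb_p k (tens_r 1 1 (rot1_pt_inv x))).
Proof.
case: x => [i|j].
  apply: connect1.
  have Ci : @tens_r 0 2 k k @: [set (inl i : pt k k); inr i] \in qu.
    exact/mem_tensor_r/imset_f.
  have := glue_rel_emb_q pu Ci (imset_f _ (setU11 _ _))
    (imset_f _ (setU1r _ (set11 _))).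
  congr glue_rel; first by congr inl; apply: val_inj.
  by congr (inr (inl _)); apply: val_inj; rewrite /= /bump /=; lia.
case: (split j) (splitK j) => [z <-|j' <-] /=; last by rewrite split_rshift.
rewrite split_lshift (ord1 z).
have idT : @tens_l 1 1 k.+1 l @: [set: pt 1 1] \in pu by exact/mem_tensor_l/set11.
have sqT : @tens_l 0 2 k k @: [set: pt 0 2] \in qu by exact/mem_tensor_l/set11.
apply: (connect_trans (y := inr (inl (lshift k.+1 ord0)))); apply: connect1.
  exact: glue_rel_emb_p idT (imset_f _ (in_setT (inr ord0)))
    (imset_f _ (in_setT (inl ord0))).
have := glue_rel_emb_q pu sqT (imset_f _ (in_setT (inr ord0)))
  (imset_f _ (in_setT (inr ord_max))).
by congr glue_rel; congr (inr (inl _)); apply: val_inj.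
Qed.

Lemma rot1_comp : pcomp pu qu = map_blocks (@rot1_pt k l) p.
Proof.
have [/eqP cov _ _] := and3P p_part.
have inc w : w \in cover p by rewrite cov inE.
rewrite (comp_by_colouring (c := fun u => pblock p (rot1_source u))).
- rewrite -(pblock_classes_map p_part (@rot1_pt_invK k l) (@rot1_ptK k l)).
  by apply: eq_imset => x; apply/setP => y; rewrite !inE !rot1_source_out.
- exact: rot1_source_glue.
move=> x y; rewrite !rot1_source_out => xy.
apply: connect_trans (connect_rot1_source x) _.
rewrite connect_glue_rel_sym; apply: connect_trans (connect_rot1_source y) _.
have xC : rot1_pt_inv x \in pblock p (rot1_pt_inv x) by rewrite mem_pblock inc.
have yC : rot1_pt_inv y \in pblock p (rot1_pt_inv x) by rewrite xy mem_pblock inc.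
apply/connect1/(glue_rel_emb_p qu (mem_tensor_r idp (pblock_mem (inc _)))).
  exact: imset_f yC.
exact: imset_f xC.
Qed.

End RotateOnePoint.

Definition enum_set (T : finType) (B : {set T}) (i : 'I_#|B|) : T :=
  @enum_val _ (mem B) i.
Arguments enum_set {T} B i.

Lemma enum_setP (T : finType) (B : {set T}) i : enum_set B i \in B.
Proof. exact: (@enum_valP _ (mem B)). Qed.

Lemma enum_set_inj (T : finType) (B : {set T}) : injective (enum_set B).
Proof. exact: (@enum_val_inj _ (mem B)). Qed.

Lemma enum_set_image (T : finType) (B : {set T}) : enum_set B @: setT = B.
Proof.
apply/setP=> x; apply/imsetP/idP => [[i _ ->]|xB]; first exact: enum_setP.
by exists (enum_rank_in xB x); rewrite // /enum_set enum_rankK_in.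
Qed.

Definition lower_cat (T : finType) n m (f : pt 0 n -> T) (e : 'I_m -> T)
    (x : pt 0 (n + m)) : T :=
  match x with
  | inl i => f (inl i)
  | inr j => match split j with inl i => f (inr i) | inr i => e i end
  end.

Section LowerCat.
Variables (T : finType) (n m : nat) (f : pt 0 n -> T) (e : 'I_m -> T).

Lemma lower_cat_tens_l : lower_cat f e \o @tens_l 0 n 0 m =1 f.
Proof. by case=> [[]|i] //=; rewrite split_lshift. Qed.

Lemma lower_cat_tens_r i : lower_cat f e (@tens_r 0 n 0 m (inr i)) = e i.
Proof. by rewrite /= split_rshift. Qed.

Lemma lower_cat_image : lower_cat f e @: setT = f @: setT :|: e @: setT.
Proof.
apply/setP=> x; apply/imsetP/setUP => [[[[]//|j] _ ->]|[]/imsetP[y _ ->]].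
- by rewrite /=; case: (split j) => i; [left|right]; apply: imset_f.
- by exists (tens_l 0 m y); last exact: esym (lower_cat_tens_l y).
- by exists (tens_r 0 n (inr y : pt 0 m)); rewrite ?in_setT // lower_cat_tens_r.
Qed.

Lemma lower_cat_inj :
  injective f -> injective e -> (forall x i, f x != e i) ->
  injective (lower_cat f e).
Proof.
move=> finj einj fe [[]//|j] [[]//|j'] /=.
case: (split j) (splitK j) => i <-; case: (split j') (splitK j') => i' <- E.
- by have [->] := finj _ _ E.
- by have := fe (inr i) i'; rewrite E eqxx.
- by have := fe (inr i') i; rewrite E eqxx.
- by rewrite (einj _ _ E).
Qed.

End LowerCat.

Definition sides_pt (T : finType) (A B : {set T}) (x : pt #|A| #|B|) : T :=
  match x with inl i => enum_set A i | inr j => enum_set B j end.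
Arguments sides_pt {T} A B x.

Lemma sides_pt_compl_bij (T : finType) (B : {set T}) : bijective (sides_pt (~: B) B).
Proof.
have notB i : enum_set (~: B) i \notin B by have := enum_setP i; rewrite inE.
apply: inj_card_bij; last by rewrite card_pt addnC cardsC.
move=> [i|j] [i'|j'] /= E.
- by rewrite (enum_set_inj E).
- by have := notB i; rewrite E enum_setP.
- by have := notB i'; rewrite -E enum_setP.
- by rewrite (enum_set_inj E).
Qed.

Lemma sides_pt_compl_pre (T : finType) (B : {set T}) :
  sides_pt (~: B) B @^-1: B = lowers #|~: B| [set: 'I_#|B|].
Proof.
apply/setP => -[i|j]; rewrite !inE /= ?enum_setP //.
by have := enum_setP i; rewrite inE => /negbTE.
Qed.

Section Category.
Variable Px : forall k l : nat, ppart k l -> Prop.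
Arguments Px : clear implicits.
Hypothesis Pcat : is_category Px.

Lemma Px_empty : Px 0 0 set0.
Proof.
have := cat_comp Pcat (cat_invol Pcat (cat_sqcap Pcat)) (cat_sqcap Pcat).
suff -> : pcomp (invol sqcap) sqcap = set0 by [].
by apply/setP=> B; rewrite inE; apply/imsetP=> -[] [] [].
Qed.

Lemma Px_permpart_id n : Px n n (permpart id).
Proof.
elim: n => [|n IH].
  have -> : permpart (@id 'I_0) = set0.
    by apply/setP=> B; rewrite inE; apply/imsetP=> -[] [].
  exact: Px_empty.
have := cat_tensor Pcat (cat_id Pcat) IH.
rewrite idp_permpart tensor_permpart (eq_permpart (g := id)) // => j.
by rewrite /ord_sum_map; case: (split j) (splitK j) => i <-.
Qed.

Lemma Px_permpart_tperm_succ n (x y : 'I_n) :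
  y = x.+1 :> nat -> Px n n (permpart (tperm x y)).
Proof.
move=> Ey; have [a Ex] : exists a, x = a :> nat by exists x.
have [b n_eq] : exists b, n = a + 2 + b.
  by exists (n - a.+2); have := ltn_ord y; lia.
subst n; rewrite Ex in Ey.
have := cat_tensor Pcat (cat_tensor Pcat (Px_permpart_id a) (cat_cross Pcat))
  (Px_permpart_id b).
rewrite cross_permpart !tensor_permpart.
rewrite (eq_permpart (g := tperm x y)) // => z.
apply: ord_inj; rewrite permE !(fun_if (@nat_of_ord _)) /ord_sum_map.
rewrite -[z == x]/(z == x :> nat) -[z == y]/(z == y :> nat) Ex Ey.
have tperm_cases (c : nat) : c != a -> c != a.+1 ->
  (if c == a then a.+1 else if c == a.+1 then a else c) = c.
  by move=> /negbTE -> /negbTE ->.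
case: splitP => [w|w] Ez; last first.
  by rewrite /= Ez tperm_cases //; apply/eqP; lia.
case: splitP => [u|u] Ew /=; rewrite Ez Ew; last first.
  by case: u {Ew} => [[|[|//]] ?]; rewrite /= ?addn0 ?addn1 eqxx // ifN_eq //; lia.
by rewrite tperm_cases //; apply/eqP; have := ltn_ord u; lia.
Qed.

Definition lower_perm_stable n (f : {perm 'I_n}) :=
  forall q, Px 0 n q -> Px 0 n (map_blocks (perm_lower f) q).

Lemma lower_perm_stable1 n : lower_perm_stable (1%g : {perm 'I_n}).
Proof. by move=> q Pq; rewrite map_blocks_id // => -[] i //=; rewrite perm1. Qed.

Lemma lower_perm_stableM n (f g : {perm 'I_n}) :
  lower_perm_stable f -> lower_perm_stable g -> lower_perm_stable (f * g)%g.
Proof.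
move=> Sf Sg q Pq; rewrite (eq_map_blocks (g := perm_lower g \o perm_lower f)).
  by rewrite map_blocks_comp; apply/Sg/Sf.
by case=> i //=; rewrite permM.
Qed.

Lemma lower_perm_stable_tperm_succ n (x y : 'I_n) :
  y = x.+1 :> nat -> lower_perm_stable (tperm x y).
Proof.
move=> Ey q Pq; rewrite -comp_permpart; last exact: (cat_sub Pcat Pq).
exact: (cat_comp Pcat (Px_permpart_tperm_succ Ey) Pq).
Qed.

(* A transposition at distance [d+2] is the conjugate of one at distance [d+1]
   by an adjacent transposition. *)
Lemma lower_perm_stable_tperm n (x y : 'I_n) : lower_perm_stable (tperm x y).
Proof.
wlog xy : x y / (x : nat) < (y : nat).
  move=> IH; case: (ltngtP (x : nat) (y : nat)) => [|yx|/val_inj ->]; first exact: IH.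
    by rewrite tpermC; apply: IH.
  by rewrite tperm1; apply: lower_perm_stable1.
have [d Ey] : exists d, (y : nat) = (x : nat) + d.+1.
  by exists ((y : nat) - (x : nat).+1); lia.
elim: d y Ey {xy} => [|d IH] y Ey.
  by apply: lower_perm_stable_tperm_succ; rewrite Ey addn1.
have zn : (x : nat) + d.+1 < n by have := ltn_ord y; lia.
pose z := Ordinal zn.
have -> : tperm x y = (tperm z y * tperm x z * tperm z y)%g.
  rewrite -mulgA -{1}(tpermV z y) -conjgE tpermJ tpermL tpermD //;
    by apply/eqP => /(congr1 val) /=; lia.
have Szy : lower_perm_stable (tperm z y).
  by apply: lower_perm_stable_tperm_succ => /=; lia.
by apply: lower_perm_stableM => //; apply: lower_perm_stableM => //; apply: IH.
Qed.

Lemma lower_perm_stable_all n (f : {perm 'I_n}) : lower_perm_stable f.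
Proof.
case: (prod_tpermP f) => ts -> _; elim: ts => [|t ts IH].
  by rewrite big_nil; apply: lower_perm_stable1.
by rewrite big_cons; apply: lower_perm_stableM => //; apply: lower_perm_stable_tperm.
Qed.

Lemma Px_relabel_lower n n' (q : ppart 0 n) (f : pt 0 n -> pt 0 n') :
  Px 0 n q -> bijective f -> Px 0 n' (map_blocks f q).
Proof.
move=> Pq fb; have := bij_eq_card fb; rewrite !card_pt !add0n => n_eq; subst n'.
have finj := bij_inj fb.
pose s (j : 'I_n) : 'I_n := if f (inr j) is inr j' then j' else j.
have sE j : f (inr j) = inr (s j) by rewrite /s; case: (f (inr j)) => [[]|].
have sinj : injective s by move=> j1 j2 sj; apply/inr_inj/finj; rewrite !sE sj.
rewrite (eq_map_blocks (g := perm_lower (perm sinj))).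
  exact: lower_perm_stable_all.
by case=> [[]|j] //=; rewrite permE sE.
Qed.

Lemma Px_rot1 k l (p : ppart k.+1 l) :
  Px k.+1 l p -> Px k (1 + l) (map_blocks (@rot1_pt k l) p).
Proof.
move=> Pp; rewrite -rot1_comp; last exact: (cat_sub Pcat Pp).
apply: (cat_comp Pcat (cat_tensor Pcat (cat_id Pcat) Pp)).
exact: (cat_tensor Pcat (cat_sqcap Pcat) (Px_permpart_id k)).
Qed.

Lemma Px_unrot1 k l (p : ppart k l.+1) :
  Px k l.+1 p ->
  Px (1 + k) l (map_blocks (@swap_pt l (1 + k) \o @rot1_pt l k \o @swap_pt k l.+1) p).
Proof.
move=> Pp; have := cat_invol Pcat (Px_rot1 (cat_invol Pcat Pp)).
by rewrite /invol -!map_blocks_comp.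
Qed.

Lemma Px_relabel_down n k l (p : ppart k l) (f : pt k l -> pt 0 n) :
  Px k l p -> bijective f -> Px 0 n (map_blocks f p).
Proof.
elim: k l p f => [|k IH] l p f Pp fb; first exact: Px_relabel_lower Pp fb.
have fb' : bijective (f \o @rot1_pt_inv k l).
  by apply: bij_comp fb _; exists (@rot1_pt k l); [apply: rot1_pt_invK|apply: rot1_ptK].
have := IH _ _ _ (Px_rot1 Pp) fb'; rewrite -map_blocks_comp.
by rewrite (eq_map_blocks (g := f)) // => x /=; rewrite rot1_ptK.
Qed.

Lemma Px_relabel_up n k l (q : ppart 0 n) (g : pt 0 n -> pt k l) :
  Px 0 n q -> bijective g -> Px k l (map_blocks g q).
Proof.
elim: k l g => [|k IH] l g Pq gb; first exact: Px_relabel_lower Pq gb.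
pose unrot := @swap_pt l (1 + k) \o @rot1_pt l k \o @swap_pt k l.+1.
pose unrot_inv := @swap_pt l.+1 k \o @rot1_pt_inv l k \o @swap_pt (1 + k) l.
have unrotK : cancel unrot_inv unrot.
  by move=> x; rewrite /unrot /unrot_inv /= swap_ptK rot1_pt_invK swap_ptK.
have unrot_invK : cancel unrot unrot_inv.
  by move=> x; rewrite /unrot /unrot_inv /= swap_ptK rot1_ptK swap_ptK.
have unrot_inv_bij : bijective unrot_inv by exists unrot.
have gb' := bij_comp unrot_inv_bij gb.
have := Px_unrot1 (IH _ _ Pq gb'); rewrite -map_blocks_comp.
by rewrite (eq_map_blocks (g := g)) // => x; apply: unrotK.
Qed.

Lemma Px_relabel k l k' l' (p : ppart k l) (f : pt k l -> pt k' l') :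
  Px k l p -> bijective f -> Px k' l' (map_blocks f p).
Proof.
move=> Pp fb; have [r rotK rotVK] := rot_pt_bij k l.
have fb' : bijective (f \o r) by apply: bij_comp fb _; exists (@rot_pt k l).
have := Px_relabel_up (Px_relabel_down Pp (rot_pt_bij k l)) fb'.
by rewrite -map_blocks_comp (eq_map_blocks (g := f)) // => x /=; rewrite rotK.
Qed.

Lemma Px_assemble (T : finType) (p : {set {set T}}) (A : {set T}) :
  partition p A -> (forall B, B \in p -> Px 0 #|B| (one_s #|B|)) ->
  exists n (s : ppart 0 n) (f : pt 0 n -> T),
    [/\ Px 0 n s, injective f, f @: setT = A & map_blocks f s = p].
Proof.
move: {2}#|p| (erefl #|p|) => r; elim: r p A => [|r IH] p A cp pA Pp.
  have p0 : p = set0 by apply/cards0_eq.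
  have A0 : A = set0 by case/and3P: pA => /eqP <- _ _; rewrite p0 /cover big_set0.
  have f : pt 0 0 -> T by case=> -[].
  exists 0, set0, f; split; first exact: Px_empty.
  - by case=> -[].
  - by rewrite A0; apply/setP=> x; rewrite inE; apply/imsetP => -[] [] [].
  - by rewrite p0 /map_blocks imset0.
have [B Bp] : exists B, B \in p by apply/set0Pn; rewrite -card_gt0 cp.
have cp' : #|p :\ B| = r by move: (cardsD1 B p); rewrite Bp cp add1n => -[].
have Pp' C : C \in p :\ B -> Px 0 #|C| (one_s #|C|) by rewrite inE => /andP[_ /Pp].
have [n [s [f [Ps finj fim fs]]]] := IH _ _ cp' (partitionD1 pA Bp) Pp'.
have BA : B \subset A by case/and3P: pA => /eqP <- _ _; apply: bigcup_sup.
have fB x : f x \in A :\: B by rewrite -fim imset_f.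
exists (n + #|B|), (tensor s (one_s #|B|)), (lower_cat f (enum_set B)); split.
- exact: (cat_tensor Pcat Ps (Pp B Bp)).
- apply: lower_cat_inj => // [|x i]; first exact: enum_set_inj.
  by apply: contraTneq (fB x) => ->; rewrite inE enum_setP.
- by rewrite lower_cat_image fim enum_set_image setUC -{1}(setIidPr BA) setID.
- rewrite (map_blocks_tensor (k := 0) (k' := 0) (lower_cat f (enum_set B))).
  rewrite (eq_map_blocks _ (lower_cat_tens_l _ _)) fs.
  rewrite /map_blocks /one_s imset_set1.
  suff -> : (lower_cat f (enum_set B) \o @tens_r 0 n 0 #|B|) @: setT = B.
    by rewrite setUC setD1K.
  rewrite -[RHS]enum_set_image; apply/setP=> x; apply/imsetP/imsetP.
    by case=> -[[]//|i] _ ->; exists i; last exact: lower_cat_tens_r.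
  by case=> i _ ->; exists (inr i); last exact: esym (lower_cat_tens_r _ _ _).
Qed.

Lemma Px_pairs m : ~~ odd m -> exists q, Px 0 m q.
Proof.
move=> m_even; rewrite -[m]odd_double_half (negbTE m_even) add0n.
elim: m./2 => [|j [q Pq]]; first by exists set0; apply: Px_empty.
by exists (tensor sqcap q); apply: (cat_tensor Pcat (cat_sqcap Pcat) Pq).
Qed.

(* With an odd number of upper points, one of them is first turned into an
   extra lower point. *)
Lemma Px_cap_lowers c s (p : ppart c s) :
  Px c s p -> lowers c [set: 'I_s] \in p -> 0 < s ->
  Px 0 s (one_s s) \/ Px (0 + 0) (1 + s) (tensor uparrow (one_s s)).
Proof.
move=> Pp Jp s_gt0; case: (boolP (odd c)) => c_odd; last first.
  left; have [q Pq] := Px_pairs c_odd.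
  have := cat_comp Pcat Pp Pq.
  by rewrite (comp_cap q (cat_sub Pcat Pp) Jp) ?cap_setT // setCT cards0.
right; case: c c_odd p Pp Jp => // c c_even p Pp Jp.
have [q Pq] := Px_pairs c_even.
have Pp' := Px_rot1 Pp.
have Jp' := map_blocks_f (@rot1_pt c s) Jp; rewrite rot1_lowers in Jp'.
have := cat_comp Pcat Pp' Pq.
rewrite (comp_cap q (cat_sub Pcat Pp') Jp') ?cap_first_lower //.
apply/card_le1_eqP => j j'; rewrite !inE -!leqNgt !leqn0 => /eqP j0 /eqP j0'.
by apply: val_inj; rewrite /= j0 j0'.
Qed.

Lemma Px_block_cap k l (p : ppart k l) (B : {set pt k l}) :
  Px k l p -> B \in p ->
  Px 0 #|B| (one_s #|B|) \/ Px (0 + 0) (1 + #|B|) (tensor uparrow (one_s #|B|)).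
Proof.
move=> Pp Bp; have [h hK Kh] := sides_pt_compl_bij B.
have h_bij : bijective h by exists (sides_pt (~: B) B).
apply: (Px_cap_lowers (Px_relabel Pp h_bij)).
  rewrite -sides_pt_compl_pre -(can2_imset_pre _ Kh hK); exact: map_blocks_f.
rewrite card_gt0; apply: contraNneq (_ : set0 \notin p) => [<- //|].
by have /and3P[] := cat_sub Pcat Pp.
Qed.

Lemma Px_of_blocks k l (p : ppart k l) :
  is_part p -> (forall B, B \in p -> Px 0 #|B| (one_s #|B|)) -> Px k l p.
Proof.
move=> pP Pp; have [n [s [f [Ps finj fim fs]]]] := Px_assemble pP Pp.
have fb : bijective f.
  apply: (inj_card_bij finj); rewrite -!cardsT -fim card_imset //.
by rewrite -fs; apply: Px_relabel Ps fb.
Qed.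

End Category.

Theorem lemma2p7 (Px : forall k l : nat, ppart k l -> Prop) :
  is_category Px ->
  (forall k l (p : ppart k l), Px k l p -> Px 0 (k + l) (bar p)) /\
  (forall k l (p : ppart k l) (B : {set pt k l}), Px k l p -> B \in p ->
     Px 0 #|B| (one_s #|B|) \/ Px (0 + 0) (1 + #|B|) (tensor uparrow (one_s #|B|))) /\
  (forall k l (p : ppart k l), is_part p ->
     (forall B, B \in p -> Px 0 #|B| (one_s #|B|)) -> Px k l p).
Proof.
move=> Pcat; split; [|split].
- by move=> k l p Pp; apply: (Px_relabel Pcat Pp (rot_pt_bij k l)).
- exact: Px_block_cap.
- exact: Px_of_blocks.
Qed.
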